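(* Let $\Lambda$ be the path algebra over $k$ of a quiver of type $A_t$ with linear orientation, and let $B$ be its indecomposable projective-injective module. Suppose $B_1\to B_2\to\cdots\to B_s\to B\to C_1\to\cdots\to C_{t-s}$ is a sequence of irreducible maps between indecomposable $\Lambda$-modules, where $t>s>0$. Then every tilting $\Lambda$-module $T$ has one of the $B_i$ ($1\leq i\leq s$) or $C_j$ ($1\leq j\leq t-s$) as an indecomposable direct summand.
   Context: A tilting module over a hereditary algebra with $t$ simple modules is a basic module $T$ with $\operatorname{Ext}^1(T,T)=0$ and $t$ non-isomorphic indecomposable summands. *)

(* Finite-dimensional representations of the linearly
   oriented quiver A_t : 0 -> 1 -> ... -> t-1 over a field k
   (= finite-dimensional modules over its path algebra).
   Linear maps act on row vectors (MathComp convention): a map V -> W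
   between spaces of dimensions m, n is a matrix 'M_(m, n), and composition
   "first f then g" is f *m g. *)
From HB Require Import structures.
From mathcomp Require Import all_boot all_order all_algebra.
Set Implicit Arguments. Unset Strict Implicit. Unset Printing Implicit Defensive.
Import GRing.Theory.
Local Open Scope ring_scope.

Definition arr (t : nat) := {p : 'I_t * 'I_t | (p.2 : nat) == (p.1).+1}.
Definition asrc t (a : arr t) : 'I_t := (val a).1.
Definition atgt t (a : arr t) : 'I_t := (val a).2.

Record rep (k : fieldType) (t : nat) := Rep {
  rdim : 'I_t -> nat ;
  rmap : forall a : arr t, 'M[k]_(rdim (asrc a), rdim (atgt a)) }.

Section Reps.
Variables (k : fieldType) (t : nat).
Implicit Types M N P X Y Z : rep k t.

Definition homfam M N := forall i : 'I_t, 'M[k]_(rdim M i, rdim N i).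

Definition is_hom M N (f : homfam M N) : Prop :=
  forall a : arr t, rmap M a *m f (atgt a) = f (asrc a) *m rmap N a.

Definition hcomp M N P (f : homfam M N) (g : homfam N P) : homfam M P :=
  fun i => f i *m g i.
Definition hid M : homfam M M := fun i => 1%:M.
Definition hzero M N : homfam M N := fun i => 0.

Definition heq M N (f g : homfam M N) : Prop := forall i, f i = g i.

Definition is_iso M N : Prop :=
  exists (f : homfam M N) (g : homfam N M), [/\ is_hom f, is_hom g,
    heq (hcomp f g) (hid M) & heq (hcomp g f) (hid N)].

Definition is_zero_rep M : Prop := forall i, rdim M i = 0%N.

Definition is_biproduct M X Y : Prop :=
  exists (iX : homfam X M) (pX : homfam M X) (iY : homfam Y M) (pY : homfam M Y),
    [/\ is_hom iX, is_hom pX, is_hom iY & is_hom pY] /\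
    [/\ heq (hcomp iX pX) (hid X), heq (hcomp iY pY) (hid Y),
        heq (hcomp iX pY) (hzero X Y), heq (hcomp iY pX) (hzero Y X) &
        forall i, pX i *m iX i + pY i *m iY i = 1%:M].

Definition indecomposable M : Prop :=
  ~ is_zero_rep M /\
  forall X Y, is_biproduct M X Y -> is_zero_rep X \/ is_zero_rep Y.

Definition is_summand X M : Prop :=
  exists (s : homfam X M) (r : homfam M X),
    [/\ is_hom s, is_hom r & heq (hcomp s r) (hid X)].

Definition split_mono X Y (f : homfam X Y) : Prop :=
  exists r : homfam Y X, is_hom r /\ heq (hcomp f r) (hid X).
Definition split_epi X Y (g : homfam X Y) : Prop :=
  exists s : homfam Y X, is_hom s /\ heq (hcomp s g) (hid Y).

Definition irreducible_map X Y (f : homfam X Y) : Prop :=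
  [/\ is_hom f, ~ split_mono f, ~ split_epi f &
      forall Z (g : homfam X Z) (h : homfam Z Y), is_hom g -> is_hom h ->
        heq (hcomp g h) f -> split_mono g \/ split_epi h].

Definition is_mono X Y (f : homfam X Y) : Prop :=
  is_hom f /\ forall i, row_free (f i).
Definition is_epi X Y (f : homfam X Y) : Prop :=
  is_hom f /\ forall i, row_full (f i).

Definition projective_rep P : Prop :=
  forall X Y (g : homfam X Y) (f : homfam P Y), is_epi g -> is_hom f ->
    exists h : homfam P X, is_hom h /\ heq (hcomp h g) f.
Definition injective_rep I : Prop :=
  forall X Y (g : homfam X Y) (f : homfam X I), is_mono g -> is_hom f ->
    exists h : homfam Y I, is_hom h /\ heq (hcomp g h) f.

(* Ext^1(M, N) = 0 (Yoneda): every short exact sequence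
   0 -> N -> E -> M -> 0 splits. *)
Definition ext1_vanishes M N : Prop :=
  forall E (f : homfam N E) (g : homfam E M),
    is_mono f -> is_epi g ->
    (forall i, f i *m g i = 0 /\ (kermx (g i) <= f i)%MS) ->
    split_epi g.

(* basic tilting module: Ext^1(T,T) = 0 and T is the direct sum of t pairwise
   non-isomorphic indecomposable modules (t = number of simple modules) *)
Definition tilting T : Prop :=
  ext1_vanishes T T /\
  exists (X : 'I_t -> rep k t) (s : forall j, homfam (X j) T)
         (r : forall j, homfam T (X j)),
    [/\ forall j, indecomposable (X j),
        forall j l, j != l -> ~ is_iso (X j) (X l) &
        forall j, is_hom (s j) /\ is_hom (r j)] /\
    [/\
        forall j, heq (hcomp (s j) (r j)) (hid (X j)),
        forall j l, j != l -> heq (hcomp (s j) (r l)) (hzero (X j) (X l)) &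
        forall i, \sum_j (r j i *m s j i) = 1%:M].

End Reps.

(* Over the linearly oriented quiver of type A_t every indecomposable module
   is an interval module [I a c], and a projective-injective one is
   [I 0 (t-1)]. An irreducible map into [I a (t-1)] with [a < t-1] must start
   at [I (a+1) (t-1)], and one out of [I 0 b] with [b > 0] must end at
   [I 0 (b-1)]; so the modules of the chain before [B] are the [I j (t-1)]
   with [0 < j], and those after it are the [I 0 j] with [j < t-1].
   The [t] summands of a tilting module are pairwise distinct intervals none of
   which continues another (that would give a non-split extension); such a
   family has at most [t] members, and if no summand were on the chain, one
   more chain interval could be added to it. *)
From mathcomp Require Import all_boot all_order all_algebra.
From mathcomp Require Import zify.
Set Implicit Arguments. Unset Strict Implicit. Unset Printing Implicit Defensive.
Import GRing.Theory.

(* [q] continues [p]; such pairs carry a non-split extension of [I_p] by [I_q]. *)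
Definition continues (p q : nat * nat) : bool :=
  [&& p.1 < q.1, q.1 <= p.2.+1 & p.2.+1 <= q.2].

Section NoncontinuingIntervals.
Variables (t : nat) (T : finType) (F : T -> nat * nat).
Hypothesis F_range : forall x, (F x).1 <= (F x).2 < t.
Hypothesis F_inj : injective F.
Hypothesis F_noncont : forall x y, ~~ continues (F x) (F y).

(* An injection into [1, t]: [x] with [F x = (a, c)] is sent to [c' + 2] for
   the longest member [(a, c')] of the family with [c' < c], or to [a + 1] if
   there is none. Equal images with different left ends would make one
   interval continue another. *)
Let marker x m := [&& (F x).1 < m, m < (F x).2 + 2 &
  (m == (F x).1.+1) || [exists y, F y == ((F x).1, m - 2)]].

Let marker_max x : exists m, marker x m /\ forall m', marker x m' -> m' <= m.
Proof.
have ex : exists m, marker x m.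
  by exists (F x).1.+1; rewrite /marker eqxx orTb andbT ltnSn /=; have := F_range x; lia.
have ub m : marker x m -> m <= (F x).2 + 2 by move=> /and3P[_ h _]; lia.
by case: (ex_maxnP ex ub) => m xm hm; exists m.
Qed.

Let marker_left_end x y m : marker x m -> marker y m -> (F x).1 = (F y).1.
Proof.
wlog lt_xy : x y / (F x).1 < (F y).1.
  move=> hwlog xm ym; case: (ltngtP (F x).1 (F y).1) => // h.
  - exact: hwlog.
  - exact/esym/(hwlog y x).
move=> /and3P[x1 x2 /orP[/eqP mE | /existsP[z /eqP Fz]]] /and3P[y1 y2 _]; first lia.
by move: (F_noncont z y); rewrite /continues Fz /=; lia.
Qed.

Let marker_longer x y m : marker x m -> (forall m', marker y m' -> m' <= m) ->
  (F x).1 = (F y).1 -> (F x).2 < (F y).2 -> False.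
Proof.
move=> /and3P[x1 x2 _] ymax same_start lt_end.
have : marker y ((F x).2 + 2).
  apply/and3P; split; [by have := F_range x; lia | lia |].
  by apply/orP; right; apply/existsP; exists x; rewrite -same_start addnK -surjective_pairing.
by move/ymax; lia.
Qed.

Lemma card_noncontinuing_intervals : #|T| <= t.
Proof.
have [phi phiP] := fin_all_exists marker_max.
have phi_inj : injective phi.
  move=> x y phi_xy; have [xm xmax] := phiP x; have [ym ymax] := phiP y.
  rewrite -phi_xy in ym ymax; have same_start := marker_left_end xm ym.
  apply: F_inj; rewrite [F x]surjective_pairing [F y]surjective_pairing same_start.
  case: (ltngtP (F x).2 (F y).2) => [lt_end|lt_end|-> //]; exfalso.
  - exact: marker_longer xm ymax same_start lt_end.
  - exact: marker_longer ym xmax (esym same_start) lt_end.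
have phi_range x : 0 < phi x <= t by have [/and3P[? ? _] _] := phiP x; have := F_range x; lia.
have lt_phi x : (phi x).-1 < t by have := phi_range x; lia.
have psi_inj : injective (fun x => Ordinal (lt_phi x)).
  move=> x y /(congr1 val) /= e; apply: phi_inj.
  by have := phi_range x; have := phi_range y; lia.
by have := leq_card _ psi_inj; rewrite card_ord.
Qed.

End NoncontinuingIntervals.

(* The interval of the [j]-th module of the chain, the projective-injective
   one being at [j = s]. *)
Definition chain_interval (t' s j : nat) : nat * nat :=
  if j <= s then (s - j, t') else (0, t' - (j - s)).

Definition on_chain (t' s : nat) (p : nat * nat) : bool :=
  ((p.2 == t') && (0 < p.1 <= s)) || ((p.1 == 0) && (s.-1 <= p.2 < t')).

Lemma on_chainP t' s p : 0 < s <= t' -> on_chain t' s p ->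
  exists2 j, j <= t'.+1 & j != s /\ p = chain_interval t' s j.
Proof.
move=> s_range; rewrite /chain_interval [p]surjective_pairing /on_chain /=.
case/orP=> /andP[/eqP end_top range]; [exists (s - p.1) | exists (s + (t' - p.2))];
  by [lia | split; [lia | case: ifP => ?; congr pair; lia]].
Qed.

Lemma noncontinuing_meets_chain t' s (F : 'I_t'.+1 -> nat * nat) :
  0 < s <= t' -> (forall i, (F i).1 <= (F i).2 < t'.+1) -> injective F ->
  (forall i j, ~~ continues (F i) (F j)) ->
  exists i j, [/\ j <= t'.+1, j != s & F i = chain_interval t' s j].
Proof.
move=> s_range F_range F_inj F_noncont.
have [i /(on_chainP s_range)[j le_jt [ne_js Fi]] | off_chain] :=
  pickP (fun i => on_chain t' s (F i)).
  by exists i, j.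
exfalso.
(* Extend the family by [(u, t')], where [u - 2] is the largest right end of
   a member starting at [0] (or [u = 1] if there is none). *)
pose starts_right_after m := (0 < m <= t'.+1) && ((m == 1) || [exists i, F i == (0, m - 2)]).
have u_ex : exists m, starts_right_after m by exists 1.
have u_ub m : starts_right_after m -> m <= t'.+1 by case/andP=> /andP[].
case: (ex_maxnP u_ex u_ub) => u /andP[u_range u_after] u_max.
have u_le_s : u <= s.
  case/orP: u_after => [/eqP-> | /existsP[i /eqP Fi]]; first lia.
  by move: (off_chain i) (F_range i); rewrite /on_chain Fi /=; lia.
pose G o := if o is Some i then F i else (u, t').
suff : #|{: option 'I_t'.+1}| <= t'.+1 by rewrite card_option card_ord ltnn.
apply: (@card_noncontinuing_intervals _ _ G).
- by case=> [i|] /=; [apply: F_range | lia].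
- move=> [i|] [j|] //= Gij; first by rewrite (F_inj _ _ Gij).
    by move: (off_chain i); rewrite /= /on_chain Gij /=; lia.
  by move: (off_chain j); rewrite /= /on_chain -Gij /=; lia.
move=> [i|] [j|] /=; rewrite /continues /=.
- exact: F_noncont.
- apply/negP => /and3P[lt_start le_start le_end].
  have [i_start0 | i_start_pos] := eqVneq (F i).1 0.
    suff : (F i).2 + 2 <= u by lia.
    apply: u_max; apply/andP; split; first by have := F_range i; lia.
    apply/orP; right; apply/existsP; exists i.
    by rewrite addnK [F i]surjective_pairing i_start0.
  case/orP: u_after => [/eqP u1 | /existsP[q /eqP Fq]]; first lia.
  by move: (F_noncont q i); rewrite /continues Fq /=; lia.
- by have := F_range j; lia.
- by lia.
Qed.

Local Open Scope ring_scope.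

Lemma mulmx_linv_rinv (R : pzRingType) m n (P A : 'M[R]_(m, n)) (Q : 'M[R]_(n, m)) :
  P *m Q = 1%:M -> Q *m A = 1%:M -> A = P.
Proof. by move=> PQ QA; rewrite -[A]mul1mx -PQ -mulmxA QA mulmx1. Qed.

Section MatrixFacts.
Variable k : fieldType.

Lemma mulmx_pinv_intertwine m n r s (X : 'M[k]_(m, n)) (q1 : 'M[k]_m) (q2 : 'M[k]_n)
    (B1 : 'M[k]_(r, m)) (B2 : 'M[k]_(s, n)) :
  X *m q2 = q1 *m X -> (q1 <= B1)%MS ->
  X *m (q2 *m pinvmx B2) = (q1 *m pinvmx B1) *m (B1 *m X *m pinvmx B2).
Proof. by move=> Xq q1B; rewrite mulmxA Xq (mulmxA (q1 *m _)) (mulmxA (q1 *m _) B1) mulmxKpV. Qed.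

Lemma mx_dim0r m n (A B : 'M[k]_(m, n)) : n = 0%N -> A = B.
Proof. by move=> n0; move: A B; rewrite n0 => A B; rewrite !thinmx0. Qed.

Lemma mx_dim0l m n (A B : 'M[k]_(m, n)) : m = 0%N -> A = B.
Proof. by move=> m0; move: A B; rewrite m0 => A B; rewrite !flatmx0. Qed.

Lemma row_full_col m (u : 'cV[k]_m) : u != 0 -> row_full u.
Proof. by move=> u_nz; rewrite /row_full eqn_leq rank_leq_col lt0n mxrank_eq0. Qed.

Lemma row_full_const1 (b1 b2 : bool) : (b2 -> b1) -> row_full (const_mx 1 : 'M[k]_(b1, b2)).
Proof.
case: b2 => [b1T | _]; last by rewrite /row_full eqn_leq rank_leq_col.
rewrite b1T //= /row_full; apply/eqP.
have -> : (const_mx 1 : 'M[k]_(1, 1)) = 1%:M by apply/matrixP => i j; rewrite !ord1 !mxE.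
exact: mxrank1.
Qed.

Lemma row_free_const1 (b1 b2 : bool) : (b1 -> b2) -> row_free (const_mx 1 : 'M[k]_(b1, b2)).
Proof.
case: b1 => [b2T | _]; last by rewrite /row_free eqn_leq rank_leq_row.
rewrite b2T //= /row_free; apply/eqP.
have -> : (const_mx 1 : 'M[k]_(1, 1)) = 1%:M by apply/matrixP => i j; rewrite !ord1 !mxE.
exact: mxrank1.
Qed.

Lemma const_mx1_mul (b1 b2 : bool) : b1 ->
  (const_mx 1 : 'M[k]_(1, b1)) *m (const_mx 1 : 'M[k]_(b1, b2)) = const_mx 1.
Proof. by case: b1 => // _; apply/matrixP => i j; rewrite !mxE big_ord1 !mxE mulr1. Qed.

Lemma mul_const_mx1 (b1 b2 : bool) : b2 ->
  (const_mx 1 : 'M[k]_(b1, b2)) *m (const_mx 1 : 'M[k]_(b2, 1)) = const_mx 1.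
Proof. by case: b2 => // _; apply/matrixP => i j; rewrite !mxE big_ord1 !mxE mulr1. Qed.

Lemma const_mx1_conj (b : bool) m (u : 'M[k]_(1, m)) (w : 'M[k]_(m, 1)) :
  (b -> u *m w = 1%:M) ->
  ((const_mx 1 : 'M[k]_(b, 1)) *m u) *m (w *m (const_mx 1 : 'M[k]_(1, b))) = 1%:M.
Proof.
case: b => [uw | _]; last by apply/matrixP => [[]].
rewrite mulmxA -(mulmxA _ u) uw ?mulmx1 //.
by apply/matrixP => i j; rewrite !ord1 !mxE big_ord1 !mxE mulr1.
Qed.

(* On matrices with at most one row and one column, [entry_sum] is the only
   entry (or [0]); it turns morphisms between interval modules into scalars. *)
Definition entry_sum m n (A : 'M[k]_(m, n)) : k := \sum_i \sum_j A i j.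

Lemma entry_sum_mulb (b1 b2 b3 : bool) (A : 'M[k]_(b1, b2)) (B : 'M[k]_(b2, b3)) :
  entry_sum (A *m B) = if b2 then entry_sum A * entry_sum B else 0.
Proof.
rewrite /entry_sum; case: b1 A B; case: b2; case: b3 => A B /=;
  by rewrite ?big_ord1 ?big_ord0 // ?mxE ?big_ord1 ?big_ord0 ?mulr0 ?mul0r.
Qed.

Lemma entry_sum_inj (b1 b2 : bool) : injective (@entry_sum b1 b2).
Proof.
move=> A B; rewrite /entry_sum; case: b1 A B; case: b2 => A B /=; rewrite ?big_ord1 ?big_ord0 => E;
  by apply/matrixP => i j; rewrite ?ord1; try case: i; try case: j.
Qed.

Lemma entry_sum_const (b1 b2 : bool) (c : k) :
  entry_sum (const_mx c : 'M[k]_(b1, b2)) = if b1 && b2 then c else 0.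
Proof. by rewrite /entry_sum; case: b1; case: b2; rewrite /= ?big_ord1 ?big_ord0 ?mxE. Qed.

Lemma entry_sum1 (b : bool) : entry_sum (1%:M : 'M[k]_b) = if b then 1 else 0.
Proof. by rewrite /entry_sum; case: b; rewrite /= ?big_ord1 ?big_ord0 ?mxE. Qed.

Lemma entry_sumB m n (A B : 'M[k]_(m, n)) : entry_sum (A - B) = entry_sum A - entry_sum B.
Proof.
rewrite /entry_sum -sumrB; apply: eq_bigr => i _.
by rewrite -sumrB; apply: eq_bigr => j _; rewrite !mxE.
Qed.

Lemma entry_sum_dim0l n (A : 'M[k]_(0, n)) : entry_sum A = 0.
Proof. by rewrite /entry_sum big_ord0. Qed.

Lemma entry_sum_dim0r m (A : 'M[k]_(m, 0)) : entry_sum A = 0.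
Proof. by rewrite /entry_sum big1 // => i _; rewrite big_ord0. Qed.

End MatrixFacts.

Section Representations.
Variables (k : fieldType) (t : nat).
Implicit Types X Y Z T : rep k t.

Lemma is_hom_comp X Y Z (f : homfam X Y) (g : homfam Y Z) :
  is_hom f -> is_hom g -> is_hom (hcomp f g).
Proof. by move=> hf hg a; rewrite /hcomp mulmxA hf -!mulmxA hg. Qed.

Lemma is_iso_sym X Y : is_iso X Y -> is_iso Y X.
Proof. by case=> f [g [hf hg fg gf]]; exists g, f. Qed.

Lemma is_iso_trans X Y Z : is_iso X Y -> is_iso Y Z -> is_iso X Z.
Proof.
case=> f [f' [hf hf' ff' f'f]] [g [g' [hg hg' gg' g'g]]].
exists (hcomp f g), (hcomp g' f'); split; try exact: is_hom_comp.
  move=> i; rewrite /hcomp mulmxA -(mulmxA (f i)).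
  by rewrite (gg' i : _ *m _ = _) mulmx1 (ff' i : _ *m _ = _).
move=> i; rewrite /hcomp mulmxA -(mulmxA (g' i)).
by rewrite (f'f i : _ *m _ = _) mulmx1 (g'g i : _ *m _ = _).
Qed.

Lemma is_summand_iso X Y Z : is_iso X Y -> is_summand Y Z -> is_summand X Z.
Proof.
case=> f [f' [hf hf' ff' _]] [s [r [hs hr sr]]].
exists (hcomp f s), (hcomp r f'); split; try exact: is_hom_comp.
move=> i; rewrite /hcomp mulmxA -(mulmxA (f i)).
by rewrite (sr i : _ *m _ = _) mulmx1 (ff' i : _ *m _ = _).
Qed.

Lemma irreducible_map_iso X X' Y Y' (f : homfam X Y) :
  is_iso X X' -> is_iso Y Y' -> irreducible_map f -> exists g : homfam X' Y', irreducible_map g.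
Proof.
case=> p [p' [hp hp' pp' p'p]] [q [q' [hq hq' qq' q'q]]] [hf f_mono f_epi f_fact].
exists (hcomp p' (hcomp f q)); split.
- by apply: is_hom_comp => //; apply: is_hom_comp.
- case=> r [hr gr]; apply: f_mono; exists (hcomp q (hcomp r p')).
  split; first by apply: is_hom_comp => //; apply: is_hom_comp.
  move=> i; have gri : p' i *m (f i *m q i *m r i) = 1%:M.
    by move: (gr i); rewrite /hcomp /hid !mulmxA.
  by rewrite /hcomp /hid !mulmxA (mulmx_linv_rinv (pp' i) gri); apply: pp'.
- case=> s [hs sg]; apply: f_epi; exists (hcomp q (hcomp s p')).
  split; first by apply: is_hom_comp => //; apply: is_hom_comp.
  move=> i; have sgi : s i *m p' i *m f i *m q i = 1%:M.
    by move: (sg i); rewrite /hcomp /hid !mulmxA.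
  by rewrite /hcomp /hid -mulmxA -(mulmx_linv_rinv sgi (qq' i)); apply: qq'.
move=> Z u v hu hv uv.
have f_uv : heq (hcomp (hcomp p u) (hcomp v q')) f.
  move=> i; have uvi : u i *m v i = p' i *m (f i *m q i) := uv i.
  rewrite /hcomp mulmxA -(mulmxA (p i)) uvi !mulmxA (pp' i : _ *m _ = _) mul1mx.
  by rewrite -mulmxA (qq' i : _ *m _ = _) mulmx1.
have [[r [hr ur]] | [s [hs vs]]] :=
  f_fact Z _ _ (is_hom_comp hp hu) (is_hom_comp hv hq') f_uv.
  left; exists (hcomp r p); split; first exact: is_hom_comp.
  move=> i; have uri : p i *m (u i *m r i) = 1%:M.
    by move: (ur i); rewrite /hcomp /hid !mulmxA.
  by rewrite /hcomp /hid mulmxA (mulmx_linv_rinv (p'p i) uri); apply: p'p.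
right; exists (hcomp q' s); split; first exact: is_hom_comp.
move=> i; have vsi : s i *m v i *m q' i = 1%:M.
  by move: (vs i); rewrite /hcomp /hid !mulmxA.
by rewrite /hcomp /hid -mulmxA -(mulmx_linv_rinv vsi (q'q i)); apply: q'q.
Qed.

(* The complementary idempotent [1 - r s] cuts out a complement of [Y] in
   [X]; indecomposability forces it to vanish, so [r s = 1]. *)
Lemma summand_indecomposable_iso Y X :
  indecomposable X -> ~ is_zero_rep Y -> is_summand Y X -> is_iso Y X.
Proof.
move=> [_ X_indec] Y_nz [s [r [hs hr sr]]].
have sr1 i : s i *m r i = 1%:M := sr i.
pose q i := 1%:M - r i *m s i.
have rs_idem i : r i *m s i *m (r i *m s i) = r i *m s i.
  by rewrite mulmxA -(mulmxA (r i)) sr1 mulmx1.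
have q_idem i : q i *m q i = q i.
  by rewrite /q mulmxBl mul1mx mulmxBr mulmx1 rs_idem subrr subr0.
have q_hom (a : arr t) : rmap X a *m q (atgt a) = q (asrc a) *m rmap X a.
  rewrite /q mulmxBr mulmxBl mulmx1 mul1mx; congr (_ - _).
  by rewrite mulmxA hr -mulmxA hs mulmxA.
pose B i := row_base (q i).
have Bq i : (B i <= q i)%MS by rewrite eq_row_base.
have qB i : (q i <= B i)%MS by rewrite eq_row_base.
have Bq_id i : B i *m q i = B i by case/submxP: (Bq i) => D ->; rewrite -mulmxA q_idem.
have BV i : B i *m pinvmx (B i) = 1%:M by rewrite mulmxVp // row_base_free.
have BX (a : arr t) : (B (asrc a) *m rmap X a <= B (atgt a))%MS.
  rewrite -Bq_id -mulmxA -q_hom mulmxA.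
  exact: submx_trans (submxMl _ _) (qB _).
pose Z := @Rep k t (fun i => \rank (q i))
  (fun a => B (asrc a) *m rmap X a *m pinvmx (B (atgt a))).
have sq i : s i *m q i = 0 by rewrite /q mulmxBr mulmx1 mulmxA sr1 mul1mx subrr.
have qr i : q i *m r i = 0 by rewrite /q mulmxBl mul1mx -mulmxA sr1 mulmx1 subrr.
have XYZ : is_biproduct X Y Z.
  exists s, r, (B : homfam Z X), (fun i => q i *m pinvmx (B i)); split; first split => //.
  - by move=> a; rewrite /= mulmxKpV.
  - by move=> a; apply: mulmx_pinv_intertwine (q_hom a) (qB _).
  split=> i.
  - exact: sr.
  - by rewrite /hcomp mulmxA Bq_id BV.
  - by rewrite /hcomp mulmxA sq mul0mx.
  - by rewrite /hcomp -Bq_id -mulmxA qr mulmx0.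
  - by rewrite mulmxKpV // /q subrKC.
have [//|Z0] := X_indec _ _ XYZ.
exists s, r; split=> // i; apply/eqP; rewrite /hcomp /hid eq_sym -subr_eq0.
by rewrite -mxrank_eq0 [X in X == _](Z0 i).
Qed.

Definition coboundary X Y (D : forall a : arr t, 'M[k]_(rdim X (asrc a), rdim Y (atgt a))) :=
  exists h : homfam X Y, forall a, D a = rmap X a *m h (atgt a) - h (asrc a) *m rmap Y a.

(* Extension of [X] by [Y] with cocycle [D], acting on row vectors [(y, x)]. *)
Definition extension_rep X Y (D : forall a : arr t, 'M[k]_(rdim X (asrc a), rdim Y (atgt a))) :=
  @Rep k t (fun i => (rdim Y i + rdim X i)%N)
    (fun a => block_mx (rmap Y a) 0 (D a) (rmap X a)).

Lemma ext1_vanishes_coboundary X Y : ext1_vanishes X Y -> forall D, @coboundary X Y D.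
Proof.
move=> XY_split D; pose E := extension_rep D.
pose f : homfam Y E := fun i => row_mx 1%:M 0.
pose g : homfam E X := fun i => col_mx 0 1%:M.
have f_mono : is_mono f.
  split=> [a | i].
    by rewrite /f /= mul_mx_row mulmx1 mulmx0 mul_row_block !mul1mx !mul0mx !addr0.
  by apply/row_freeP; exists (col_mx 1%:M 0); rewrite /f mul_row_col mulmx1 mulmx0 addr0.
have g_epi : is_epi g.
  split=> [a | i].
    by rewrite /g /= mul_block_col mul_col_mx !mulmx0 !mulmx1 mul0mx mul1mx !addr0 add0r.
  by apply/row_fullP; exists (row_mx 0 1%:M); rewrite /g mul_row_col mulmx1 mulmx0 add0r.
have fg_exact i : f i *m g i = 0 /\ (kermx (g i) <= f i)%MS.
  split; first by rewrite /f /g mul_row_col mulmx0 mul0mx addr0.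
  apply/submxP; exists (lsubmx (kermx (g i))).
  have := mulmx_ker (g i); rewrite -{1}(hsubmxK (kermx (g i))).
  rewrite /g mul_row_col mulmx0 mulmx1 add0r => rker0.
  by rewrite -{1}(hsubmxK (kermx (g i))) rker0 /f mul_mx_row mulmx1 mulmx0.
have [u [hu ug]] := XY_split E f g f_mono g_epi fg_exact.
exists (fun i => lsubmx (u i)).
have uE i : u i = row_mx (lsubmx (u i)) 1%:M.
  have := ug i; rewrite /hcomp /hid -{1}(hsubmxK (u i)) /g mul_row_col mulmx0 mulmx1 add0r.
  by move=> <-; rewrite hsubmxK.
move=> a; have := hu a.
rewrite (uE (atgt a)) (uE (asrc a)) /= mul_mx_row mul_row_block.
by move=> /eq_row_mx[Da _]; rewrite !row_mxKl Da mul1mx addrAC subrr add0r.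
Qed.

Lemma coboundary_summand T X Y (sX : homfam X T) (rX : homfam T X)
    (sY : homfam Y T) (rY : homfam T Y) :
  is_hom sX -> heq (hcomp sX rX) (hid X) -> is_hom rY -> heq (hcomp sY rY) (hid Y) ->
  (forall D, @coboundary T T D) -> forall D, @coboundary X Y D.
Proof.
move=> hsX sX_rX hrY sY_rY T_cob D.
have [h hD] := T_cob (fun a => rX (asrc a) *m D a *m sY (atgt a)).
exists (fun i => sX i *m h i *m rY i) => a.
have sXr := sX_rX (asrc a); have sYr := sY_rY (atgt a); rewrite /hcomp /hid in sXr sYr.
transitivity (sX (asrc a) *m (rmap T a *m h (atgt a) - h (asrc a) *m rmap T a) *m rY (atgt a)).
  by rewrite -hD !mulmxA sXr mul1mx -mulmxA sYr mulmx1.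
by rewrite mulmxBr mulmxBl !mulmxA hsX -!mulmxA hrY.
Qed.

End Representations.

Section LinearQuiver.
Variables (k : fieldType) (t' : nat).
Local Notation t := t'.+1.
Implicit Types X Y : rep k t.

Definition next_vertex (i : 'I_t) : 'I_t := inord i.+1.
Definition prev_vertex (i : 'I_t) : 'I_t := inord i.-1.

(* The map along the arrow leaving (resp. entering) [i], or [0] if there is
   no such arrow. *)
Definition out_map X (i : 'I_t) : 'M[k]_(rdim X i, rdim X (next_vertex i)) :=
  match Sumbool.sumbool_of_bool ((next_vertex i : nat) == i.+1) with
  | left H => rmap X (exist _ (i, next_vertex i) H)
  | right _ => 0 end.

Definition in_map X (i : 'I_t) : 'M[k]_(rdim X (prev_vertex i), rdim X i) :=
  match Sumbool.sumbool_of_bool ((i : nat) == (prev_vertex i).+1) with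
  | left H => rmap X (exist _ (prev_vertex i, i) H)
  | right _ => 0 end.

Lemma next_vertexE (i : 'I_t) : (i.+1 < t)%N -> next_vertex i = i.+1 :> nat.
Proof. by move=> lt_it; rewrite /next_vertex inordK. Qed.

Lemma next_vertex_inord n : (n.+1 < t)%N -> next_vertex (inord n) = inord n.+1.
Proof. by move=> lt_nt; apply: val_inj; rewrite /= next_vertexE /= !inordK // ltnW. Qed.

Lemma prev_next_vertex (i : 'I_t) : (i.+1 < t)%N -> prev_vertex (next_vertex i) = i.
Proof. by move=> lt_it; apply: val_inj; rewrite /prev_vertex next_vertexE //= inordK // ltnW. Qed.

Lemma out_map_last X (i : 'I_t) : ~~ (i.+1 < t)%N -> out_map X i = 0.
Proof.
move=> last_i; rewrite /out_map; case: Sumbool.sumbool_of_bool => // H; exfalso.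
by move/eqP: H last_i => <-; rewrite ltn_ord.
Qed.

Lemma rmap_out_map X (i : 'I_t) H : rmap X (exist _ (i, next_vertex i) H) = out_map X i.
Proof.
rewrite /out_map; case: Sumbool.sumbool_of_bool => [H'|]; first by rewrite (bool_irrelevance H H').
by rewrite H.
Qed.

Lemma in_map_next X (v : forall j : 'I_t, 'rV[k]_(rdim X j)) (i : 'I_t) :
  (i.+1 < t)%N -> v (prev_vertex (next_vertex i)) *m in_map X (next_vertex i) = v i *m out_map X i.
Proof.
move=> lt_it; rewrite /in_map /out_map.
case: Sumbool.sumbool_of_bool => H1.
  2: by exfalso; move: H1; rewrite prev_next_vertex // next_vertexE // eqxx.
case: Sumbool.sumbool_of_bool => H2.
  2: by exfalso; move: H2; rewrite next_vertexE // eqxx.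
by move: H1; rewrite prev_next_vertex // => H1; rewrite (bool_irrelevance H1 H2).
Qed.

Lemma is_homP X Y (f : homfam X Y) :
  is_hom f <-> forall i, out_map X i *m f (next_vertex i) = f i *m out_map Y i.
Proof.
split=> [hf i | hf [[i j] H]].
  rewrite /out_map; case: Sumbool.sumbool_of_bool => H; last by rewrite mul0mx mulmx0.
  exact: (hf (exist _ (i, next_vertex i) H)).
have j_next : j = next_vertex i by apply: val_inj; rewrite /= next_vertexE -(eqP H).
by subst j; rewrite /is_hom /= !rmap_out_map; apply: hf.
Qed.

End LinearQuiver.

Section IntervalReps.
Variables (k : fieldType) (t' : nat).
Local Notation t := t'.+1.

Definition in_interval (a c n : nat) : bool := (a <= n <= c)%N.

Definition interval_rep (a c : nat) : rep k t :=
  @Rep k t (fun i => nat_of_bool (in_interval a c i)) (fun _ => const_mx 1).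
Local Notation I := interval_rep.

Lemma out_map_interval a c (i : 'I_t) : (i.+1 < t)%N -> out_map (I a c) i = const_mx 1.
Proof.
move=> lt_it; rewrite /out_map; case: Sumbool.sumbool_of_bool => // H.
by exfalso; move: H; rewrite next_vertexE // eqxx.
Qed.

Definition hom_coef a b c d (g : homfam (I a b) (I c d)) (n : nat) : k :=
  entry_sum (g (inord n)).

Lemma hom_coef_outside a b c d (g : homfam (I a b) (I c d)) n : (n < t)%N ->
  ~~ (in_interval a b n && in_interval c d n) -> hom_coef g n = 0.
Proof.
move=> lt_nt out_n; rewrite /hom_coef; move: (g (inord n)); rewrite /= inordK //.
by move: out_n; case: (in_interval a b n); case: (in_interval c d n) => //= _ A;
  rewrite ?entry_sum_dim0l ?entry_sum_dim0r.
Qed.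

Lemma hom_coef_inside a b c d (g : homfam (I a b) (I c d)) n : (n < t)%N ->
  hom_coef g n != 0 -> in_interval a b n /\ in_interval c d n.
Proof.
move=> lt_nt; have [/andP// | out_n] := boolP (in_interval a b n && in_interval c d n).
by rewrite hom_coef_outside // eqxx.
Qed.

Lemma is_hom_intervalP a b c d (g : homfam (I a b) (I c d)) :
  is_hom g <-> forall n, (n.+1 < t)%N ->
    (if in_interval a b n && in_interval a b n.+1 then hom_coef g n.+1 else 0) =
    (if in_interval c d n && in_interval c d n.+1 then hom_coef g n else 0).
Proof.
split=> [/is_homP hg n lt_nt | hg].
  have := congr1 (@entry_sum _ _ _) (hg (inord n)).
  rewrite !out_map_interval ?inordK ?(ltnW lt_nt) // !entry_sum_mulb !entry_sum_const.
  rewrite next_vertex_inord // -/(hom_coef g n) -/(hom_coef g n.+1) /= !inordK ?(ltnW lt_nt) //.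
  case: (in_interval a b n); case: (in_interval a b n.+1);
    case: (in_interval c d n); case: (in_interval c d n.+1);
    by rewrite /= ?mul1r ?mulr1 ?mul0r ?mulr0.
apply/is_homP => i.
have [lt_it | last_i] := ltnP i.+1 t; last by rewrite !out_map_last -?ltnNge // mul0mx mulmx0.
apply: entry_sum_inj; rewrite !out_map_interval // !entry_sum_mulb !entry_sum_const.
set g1 := entry_sum (g (next_vertex i)); set g0 := entry_sum (g i).
have := hg _ lt_it; rewrite /hom_coef -/(next_vertex i) inord_val -/g1 -/g0 /= next_vertexE //.
case: (in_interval a b i); case: (in_interval a b i.+1);
  case: (in_interval c d i); case: (in_interval c d i.+1);
  by rewrite /= ?mul1r ?mulr1 ?mul0r ?mulr0.
Qed.

Lemma hom_coef_comp a b c d e f (g : homfam (I a b) (I c d)) (h : homfam (I c d) (I e f)) n :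
  (n < t)%N ->
  hom_coef (hcomp g h) n = if in_interval c d n then hom_coef g n * hom_coef h n else 0.
Proof.
move=> lt_nt; rewrite /hom_coef /hcomp entry_sum_mulb.
by rewrite -/(hom_coef g n) -/(hom_coef h n) /= inordK.
Qed.

Lemma hom_coef_id a b n : (n < t)%N ->
  hom_coef (hid (I a b)) n = if in_interval a b n then 1 else 0.
Proof. by move=> lt_nt; rewrite /hom_coef /hid entry_sum1 /= inordK. Qed.

Lemma hom_coef_inj a b c d (g h : homfam (I a b) (I c d)) :
  (forall n, (n < t)%N -> hom_coef g n = hom_coef h n) -> heq g h.
Proof.
by move=> gh i; apply: entry_sum_inj; have := gh i (ltn_ord i); rewrite /hom_coef inord_val.
Qed.

Definition interval_map a b c d (e : k) : homfam (I a b) (I c d) := fun _ => const_mx e.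

Lemma hom_coef_interval_map a b c d e n : (n < t)%N ->
  hom_coef (interval_map a b c d e) n = if in_interval a b n && in_interval c d n then e else 0.
Proof. by move=> lt_nt; rewrite /hom_coef entry_sum_const /= inordK. Qed.

Lemma is_hom_interval_map a b c d e :
  (forall n, (n.+1 < t)%N ->
    [&& in_interval a b n, in_interval a b n.+1 & in_interval c d n.+1] =
    [&& in_interval a b n, in_interval c d n & in_interval c d n.+1]) ->
  is_hom (interval_map a b c d e).
Proof.
move=> supp; apply/is_hom_intervalP => n lt_nt; rewrite !hom_coef_interval_map ?(ltnW lt_nt) //.
have := supp n lt_nt.
by case: (in_interval a b n); case: (in_interval a b n.+1);
  case: (in_interval c d n); case: (in_interval c d n.+1).
Qed.

Section IntervalHom.
Variables (a b c d : nat) (g : homfam (I a b) (I c d)).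
Hypothesis hg : is_hom g.

Lemma hom_coef_step_right m : (m.+1 < t)%N ->
  in_interval a b m -> in_interval c d m -> in_interval c d m.+1 -> hom_coef g m != 0 ->
  in_interval a b m.+1 /\ hom_coef g m.+1 = hom_coef g m.
Proof.
move=> lt_mt ab_m cd_m cd_m1; have := (is_hom_intervalP g).1 hg m lt_mt.
rewrite ab_m cd_m cd_m1 /=; case: (in_interval a b m.+1) => [-> //|<-].
by rewrite eqxx.
Qed.

Lemma hom_coef_step_left m : (m.+1 < t)%N ->
  in_interval a b m -> in_interval a b m.+1 -> in_interval c d m.+1 -> hom_coef g m.+1 != 0 ->
  in_interval c d m /\ hom_coef g m = hom_coef g m.+1.
Proof.
move=> lt_mt ab_m ab_m1 cd_m1; have := (is_hom_intervalP g).1 hg m lt_mt.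
rewrite ab_m ab_m1 cd_m1 /= andbT; case: (in_interval c d m) => [-> //|->].
by rewrite eqxx.
Qed.

Lemma interval_hom_support n : (d < t)%N -> (n < t)%N -> hom_coef g n != 0 ->
  [/\ (c <= a <= n)%N, (n <= d <= b)%N &
      forall m, (a <= m <= d)%N -> hom_coef g m = hom_coef g n].
Proof.
move=> lt_dt lt_nt gn; have [ab_n cd_n] := hom_coef_inside lt_nt gn.
move: (ab_n) (cd_n); rewrite /in_interval => /andP[an nb] /andP[cn nd].
have coef_right j : (n + j <= d)%N -> in_interval a b (n + j) /\ hom_coef g (n + j) = hom_coef g n.
  elim: j => [|j IH] le_jd; first by rewrite addn0.
  have [ab_j gj] := IH ltac:(lia).
  have lt_jt : ((n + j).+1 < t)%N by lia.
  have cd_j : in_interval c d (n + j) by rewrite /in_interval; lia.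
  have cd_j1 : in_interval c d (n + j).+1 by rewrite /in_interval; lia.
  have [ab_j1 gj1] := hom_coef_step_right lt_jt ab_j cd_j cd_j1 ltac:(by rewrite gj).
  by rewrite addnS ab_j1 gj1.
have coef_left j : (j <= n)%N -> (a <= n - j)%N ->
    in_interval c d (n - j) /\ hom_coef g (n - j) = hom_coef g n.
  elim: j => [|j IH] le_jn le_aj; first by rewrite subn0.
  have [cd_j gj] := IH ltac:(lia) ltac:(lia).
  have n_j : (n - j = (n - j.+1).+1)%N by lia.
  rewrite n_j in cd_j gj.
  have lt_jt : ((n - j.+1).+1 < t)%N by lia.
  have ab_j : in_interval a b (n - j.+1) by rewrite /in_interval; lia.
  have ab_j1 : in_interval a b (n - j.+1).+1 by rewrite /in_interval; lia.
  have [cd_j1 gj1] := hom_coef_step_left lt_jt ab_j ab_j1 cd_j ltac:(by rewrite gj).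
  by rewrite cd_j1 gj1.
have [ab_d _] := coef_right (d - n)%N ltac:(lia); rewrite subnKC // /in_interval in ab_d.
have [cd_a _] := coef_left (n - a)%N ltac:(lia) ltac:(lia); rewrite subKn // /in_interval in cd_a.
split; [lia | lia | move=> m am_d].
have [le_mn | lt_nm] := leqP m n.
  by have [_] := coef_left (n - m)%N ltac:(lia) ltac:(lia); rewrite subKn.
by have [_] := coef_right (m - n)%N ltac:(lia); rewrite subnKC // ltnW.
Qed.

End IntervalHom.

Lemma interval_retraction a b c d (g : homfam (I a b) (I c d)) (h : homfam (I c d) (I a b)) n :
  heq (hcomp g h) (hid (I a b)) -> (n < t)%N -> in_interval a b n ->
  [/\ in_interval c d n, hom_coef g n != 0 & hom_coef h n != 0].
Proof.
move=> gh lt_nt ab_n.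
have : hom_coef (hcomp g h) n = hom_coef (hid (I a b)) n by rewrite /hom_coef gh.
rewrite hom_coef_comp // hom_coef_id // ab_n.
case: (in_interval c d n) => [gh1 | /eqP]; last by rewrite eq_sym oner_eq0.
by split=> //; apply: contra_eq_neq gh1 => ->; rewrite ?mul0r ?mulr0 eq_sym oner_eq0.
Qed.

Lemma interval_endo_inv a b (g : homfam (I a b) (I a b)) n :
  is_hom g -> (b < t)%N -> (n < t)%N -> hom_coef g n != 0 ->
  exists h : homfam (I a b) (I a b),
    [/\ is_hom h, heq (hcomp g h) (hid _) & heq (hcomp h g) (hid _)].
Proof.
move=> hg lt_bt lt_nt gn; have [_ _ g_const] := interval_hom_support hg lt_bt lt_nt gn.
exists (interval_map a b a b (hom_coef g n)^-1); split.
- by apply: is_hom_interval_map => m _; case: (in_interval a b m); case: (in_interval a b m.+1).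
- apply: hom_coef_inj => m lt_mt.
  rewrite hom_coef_comp // hom_coef_id // hom_coef_interval_map // andbb.
  by case: ifP => //; rewrite /in_interval => ab_m; rewrite ab_m g_const // mulfV.
- apply: hom_coef_inj => m lt_mt.
  rewrite hom_coef_comp // hom_coef_id // hom_coef_interval_map // andbb.
  by case: ifP => //; rewrite /in_interval => ab_m; rewrite ab_m g_const // mulVf.
Qed.

Lemma interval_hom_factor_incl x y a b (g : homfam (I x y) (I a b)) :
  is_hom g -> (a < b < t)%N -> hom_coef g a = 0 ->
  exists g' : homfam (I x y) (I a.+1 b),
    is_hom g' /\ heq (hcomp g' (interval_map a.+1 b a b 1)) g.
Proof.
move=> hg /andP[lt_ab lt_bt] ga0.
have g'E n : (n < t)%N -> hom_coef (hcomp g (interval_map a b a.+1 b 1)) n =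
    if in_interval a.+1 b n then hom_coef g n else 0.
  move=> lt_nt; rewrite hom_coef_comp // hom_coef_interval_map //.
  have [le_na | lt_an] := leqP n a.
    have -> : in_interval a.+1 b n = false by rewrite /in_interval; lia.
    by rewrite andbF mulr0 if_same.
  have -> : in_interval a b n = in_interval a.+1 b n by rewrite /in_interval; lia.
  by case: (in_interval a.+1 b n); rewrite ?mulr1.
exists (hcomp g (interval_map a b a.+1 b 1)); split.
  apply/is_hom_intervalP => n lt_nt; rewrite !g'E ?(ltnW lt_nt) //.
  have := (is_hom_intervalP g).1 hg n lt_nt.
  case: (ltngtP a n) => [lt_an | lt_na | <-].
  - have -> : in_interval a.+1 b n = in_interval a b n by rewrite /in_interval; lia.
    have -> : in_interval a.+1 b n.+1 = in_interval a b n.+1 by rewrite /in_interval; lia.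
    by case: (in_interval a b n); case: (in_interval a b n.+1);
      case: (in_interval x y n); case: (in_interval x y n.+1).
  - have -> : in_interval a.+1 b n = false by rewrite /in_interval; lia.
    have -> : in_interval a.+1 b n.+1 = false by rewrite /in_interval; lia.
    by rewrite /= !if_same.
  - rewrite ga0 if_same => g_a.
    have -> : in_interval a.+1 b a = false by rewrite /in_interval; lia.
    have -> : in_interval a.+1 b a.+1 by rewrite /in_interval; lia.
    by rewrite g_a.
apply: hom_coef_inj => n lt_nt; rewrite hom_coef_comp // g'E // hom_coef_interval_map //.
case: (ltngtP a n) => [lt_an | lt_na | <-].
- have -> : in_interval a.+1 b n = in_interval a b n by rewrite /in_interval; lia.
  case ab_n: (in_interval a b n) => /=; first by rewrite mulr1.
  by rewrite hom_coef_outside // ab_n andbF.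
- have -> : in_interval a.+1 b n = false by rewrite /in_interval; lia.
  by rewrite hom_coef_outside // negb_and orbC /in_interval; lia.
- by have -> : in_interval a.+1 b a = false by rewrite /in_interval; lia.
Qed.

Lemma interval_hom_factor_proj a b x y (g : homfam (I a b) (I x y)) :
  is_hom g -> (a < b < t)%N -> hom_coef g b = 0 ->
  exists g' : homfam (I a b.-1) (I x y),
    is_hom g' /\ heq (hcomp (interval_map a b a b.-1 1) g') g.
Proof.
move=> hg /andP[lt_ab lt_bt] gb0.
have g'E n : (n < t)%N -> hom_coef (hcomp (interval_map a b.-1 a b 1) g) n =
    if in_interval a b.-1 n then hom_coef g n else 0.
  move=> lt_nt; rewrite hom_coef_comp // hom_coef_interval_map //.
  have [lt_nb | le_bn] := ltnP n b.
    have -> : in_interval a b n = in_interval a b.-1 n by rewrite /in_interval; lia.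
    by case: (in_interval a b.-1 n); rewrite ?mul1r.
  have -> : in_interval a b.-1 n = false by rewrite /in_interval; lia.
  by rewrite mul0r if_same.
exists (hcomp (interval_map a b.-1 a b 1) g); split.
  apply/is_hom_intervalP => n lt_nt; rewrite !g'E ?(ltnW lt_nt) //.
  have := (is_hom_intervalP g).1 hg n lt_nt.
  case: (ltngtP n.+1 b) => [lt_nb | lt_bn | nb].
  - have -> : in_interval a b.-1 n = in_interval a b n by rewrite /in_interval; lia.
    have -> : in_interval a b.-1 n.+1 = in_interval a b n.+1 by rewrite /in_interval; lia.
    by case: (in_interval a b n); case: (in_interval a b n.+1);
      case: (in_interval x y n); case: (in_interval x y n.+1).
  - have -> : in_interval a b.-1 n = false by rewrite /in_interval; lia.
    have -> : in_interval a b.-1 n.+1 = false by rewrite /in_interval; lia.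
    by rewrite /= !if_same.
  - rewrite nb gb0 if_same => g_n.
    have -> : in_interval a b.-1 b = false by rewrite /in_interval; lia.
    have -> : in_interval a b.-1 n = in_interval a b n by rewrite /in_interval; lia.
    by rewrite if_same; case: (in_interval a b n); rewrite ?if_same.
apply: hom_coef_inj => n lt_nt; rewrite hom_coef_comp // g'E // hom_coef_interval_map //.
have [lt_nb | le_bn] := ltnP n b.
  have -> : in_interval a b.-1 n = in_interval a b n by rewrite /in_interval; lia.
  case ab_n: (in_interval a b n) => /=; first by rewrite mul1r.
  by rewrite hom_coef_outside // ab_n.
have -> : in_interval a b.-1 n = false by rewrite /in_interval; lia.
have [-> | ne_nb] := eqVneq n b; first by rewrite gb0.
by rewrite hom_coef_outside //= /in_interval; lia.
Qed.

(* If [g] is nonzero at [a] it is an isomorphism; otherwise it factors through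
   the inclusion of [I a.+1 t'], which is not split epi, so the first factor is
   split mono. *)
Lemma irreducible_into_final_interval x y a (g : homfam (I x y) (I a t')) :
  irreducible_map g -> (x <= y < t)%N -> (a < t')%N -> x = a.+1 /\ y = t'.
Proof.
case=> hg _ g_epi g_fact /andP[le_xy lt_yt] lt_at.
have [ga0 | ga] := eqVneq (hom_coef g a) 0; last first.
  have [/andP[le_ax le_xa] /andP[_ le_ty] _] := interval_hom_support hg (ltnSn t') (ltnW lt_at) ga.
  have ex : x = a by lia.
  have ey : y = t' by lia.
  subst x y; have [h [hh _ hg_id]] := interval_endo_inv hg (ltnSn t') (ltnW lt_at) ga.
  by case: g_epi; exists h.
have incl_hom : is_hom (interval_map a.+1 t' a t' 1).
  by apply: is_hom_interval_map => n _; rewrite /in_interval; lia.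
have [g' [hg' g'E]] := interval_hom_factor_incl hg ltac:(lia) ga0.
have [[r [hr g'r]] | [s [_ s_incl]]] := g_fact _ _ _ hg' incl_hom g'E; last first.
  have [] := interval_retraction s_incl (ltnW lt_at) ltac:(rewrite /in_interval; lia).
  by rewrite /in_interval; lia.
have [_ g'x rx] := interval_retraction (n := x) g'r ltac:(lia) ltac:(rewrite /in_interval; lia).
have [/andP[le_ax _] /andP[_ le_ty] _] :=
  interval_hom_support (n := x) hg' (ltnSn t') ltac:(lia) g'x.
have [/andP[le_xa _] _ _] := interval_hom_support (n := x) hr lt_yt ltac:(lia) rx.
by split; lia.
Qed.

Lemma irreducible_from_initial_interval b x y (g : homfam (I 0 b) (I x y)) :
  irreducible_map g -> (0 < b < t)%N -> (x <= y < t)%N -> x = 0%N /\ y = b.-1.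
Proof.
case=> hg g_mono _ g_fact /andP[b_gt0 lt_bt] /andP[le_xy lt_yt].
have [gb0 | gb] := eqVneq (hom_coef g b) 0; last first.
  have [/andP[le_x0 _] /andP[le_by le_yb] _] := interval_hom_support hg lt_yt lt_bt gb.
  have ex : x = 0%N by lia.
  have ey : y = b by lia.
  subst x y; have [h [hh hg_id _]] := interval_endo_inv hg lt_bt lt_bt gb.
  by case: g_mono; exists h.
have proj_hom : is_hom (interval_map 0 b 0 b.-1 1).
  by apply: is_hom_interval_map => n _; rewrite /in_interval; lia.
have [g' [hg' g'E]] := interval_hom_factor_proj hg ltac:(lia) gb0.
have [[r [_ proj_r]] | [s [hs sg']]] := g_fact _ _ _ proj_hom hg' g'E.
  have [] := interval_retraction (n := b) proj_r lt_bt ltac:(rewrite /in_interval; lia).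
  by rewrite /in_interval; lia.
have [_ sy g'y] := interval_retraction (n := y) sg' lt_yt ltac:(rewrite /in_interval; lia).
have [/andP[le_x0 _] /andP[_ le_yb] _] := interval_hom_support (n := y) hg' lt_yt lt_yt g'y.
have [_ /andP[_ le_by] _] := interval_hom_support (n := y) hs ltac:(lia) lt_yt sy.
by split; lia.
Qed.

(* [I a c] is not projective unless [c] is the sink: it is a proper quotient
   of [I a c.+1] and would be a direct summand of it. *)
Lemma projective_interval_final M a c :
  (a <= c < t)%N -> projective_rep M -> is_iso M (I a c) -> c = t'.
Proof.
move=> /andP[le_ac lt_ct] M_proj [phi [psi [hphi hpsi phi_psi psi_phi]]].
apply/eqP; rewrite eqn_leq -ltnS lt_ct /= leqNgt; apply/negP => lt_ct'.
have p_epi : is_epi (interval_map a c.+1 a c 1).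
  split=> [|i]; last by apply: row_full_const1; rewrite /in_interval; lia.
  by apply: is_hom_interval_map => n _; rewrite /in_interval; lia.
have [h [hh hp]] := M_proj _ _ _ phi p_epi hphi.
have psi_hp : heq (hcomp (hcomp psi h) (interval_map a c.+1 a c 1)) (hid (I a c)).
  by move=> i; rewrite /hcomp -mulmxA (hp i : _ *m _ = _); apply: psi_phi.
have [_ hc _] := interval_retraction (n := c) psi_hp ltac:(lia) ltac:(rewrite /in_interval; lia).
have [_ /andP[_ le_c1c] _] :=
  interval_hom_support (n := c) (is_hom_comp hpsi hh) lt_ct' ltac:(lia) hc.
by rewrite ltnn in le_c1c.
Qed.

Lemma injective_interval_initial M a c :
  (a <= c < t)%N -> injective_rep M -> is_iso M (I a c) -> a = 0%N.
Proof.
move=> /andP[le_ac lt_ct] M_inj [phi [psi [hphi hpsi phi_psi psi_phi]]].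
apply/eqP; rewrite -leqn0 leqNgt; apply/negP => a_gt0.
have j_mono : is_mono (interval_map a c a.-1 c 1).
  split=> [|i]; last by apply: row_free_const1; rewrite /in_interval; lia.
  by apply: is_hom_interval_map => n _; rewrite /in_interval; lia.
have [h [hh jh]] := M_inj _ _ _ psi j_mono hpsi.
have jh_phi : heq (hcomp (interval_map a c a.-1 c 1) (hcomp h phi)) (hid (I a c)).
  by move=> i; rewrite /hcomp mulmxA (jh i : _ *m _ = _); apply: psi_phi.
have [_ _ ha] := interval_retraction (n := a) jh_phi ltac:(lia) ltac:(rewrite /in_interval; lia).
have [/andP[le_aa1 _] _ _] :=
  interval_hom_support (n := a) (is_hom_comp hh hphi) lt_ct ltac:(lia) ha.
lia.
Qed.

(* Let [c] be the highest vertex where [X] is nonzero, [phi] the sum of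
   coordinates on [X c], and [a] the lowest vertex from which the path to [c]
   followed by [phi] is nonzero. Pulling [phi] back and pushing a vector with
   [phi]-value 1 forward from [a] splits [I a c] off [X]. *)
Section IntervalSummand.
Variables (X : rep k t) (c : 'I_t).
Hypothesis X_c : (0 < rdim X c)%N.
Hypothesis X_above : forall i : 'I_t, (c < i)%N -> rdim X i = 0%N.

Fixpoint path_functional (n : nat) (i : 'I_t) : 'cV[k]_(rdim X i) :=
  if n is n'.+1 then out_map X i *m path_functional n' (next_vertex i) else const_mx 1.
Definition top_functional (i : 'I_t) := path_functional (c - i) i.

Lemma top_functional_step (i : 'I_t) : (i < c)%N ->
  top_functional i = out_map X i *m top_functional (next_vertex i).
Proof.
move=> lt_ic; have lt_it : (i.+1 < t)%N by apply: leq_ltn_trans lt_ic _.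
have ci : (c - i = (c - i.+1).+1)%N by rewrite subnS prednK // subn_gt0.
by rewrite /top_functional next_vertexE // ci.
Qed.

Lemma top_functional_top : top_functional c != 0.
Proof.
rewrite /top_functional subnn /=; apply/eqP => /matrixP /(_ (Ordinal X_c) ord0).
by rewrite !mxE; apply/eqP; apply: oner_neq0.
Qed.

Let reaches_top n := (n <= c)%N && (top_functional (inord n) != 0).
Let reaches_top_c : exists n, reaches_top n.
Proof. by exists c; rewrite /reaches_top leqnn inord_val top_functional_top. Qed.

Definition low_end := ex_minn reaches_top_c.
Local Notation a := low_end.

Lemma low_end_le : (a <= c)%N.
Proof. by rewrite /low_end; case: ex_minnP => n /andP[]. Qed.

Lemma top_functional_low_end : top_functional (inord a) != 0.
Proof. by rewrite /low_end; case: ex_minnP => n /andP[]. Qed.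

Lemma top_functional_below n : (n < a)%N -> top_functional (inord n) = 0.
Proof.
rewrite /low_end; case: ex_minnP => m /andP[le_mc _] m_min lt_nm.
apply/eqP; apply: contraTT (lt_nm) => nz; rewrite -leqNgt; apply: m_min.
by rewrite /reaches_top nz andbT (leq_trans (ltnW lt_nm)).
Qed.

Fixpoint pushed_vector (n : nat) (i : 'I_t) : 'rV[k]_(rdim X i) :=
  if n is n'.+1 then pushed_vector n' (prev_vertex i) *m in_map X i
  else pinvmx (top_functional i).
Definition low_vector (i : 'I_t) := pushed_vector (i - a) i.

Lemma low_vector_step (i : 'I_t) : (a <= i)%N -> (i.+1 < t)%N ->
  low_vector (next_vertex i) = low_vector i *m out_map X i.
Proof.
move=> le_ai lt_it; rewrite /low_vector next_vertexE // subSn //=.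
exact: (in_map_next (fun j => pushed_vector (i - a) j)).
Qed.

Lemma low_vector_top_functional n : (a <= n <= c)%N ->
  low_vector (inord n) *m top_functional (inord n) = 1%:M.
Proof.
move=> /andP[]; elim: n => [|n IH] le_an le_nc.
  have a0 : a = 0%N by apply/eqP; rewrite -leqn0.
  rewrite /low_vector inordK // a0 /= mulVpmx //.
  by apply: row_full_col; have := top_functional_low_end; rewrite a0.
have lt_at : (a < t)%N by exact: leq_ltn_trans low_end_le (ltn_ord c).
case: (ltngtP a n.+1) le_an => // [lt_an _ | <- _]; last first.
  by rewrite /low_vector inordK // subnn /= mulVpmx //; apply/row_full_col/top_functional_low_end.
have lt_nt : (n.+1 < t)%N by apply: leq_ltn_trans le_nc _.
rewrite -next_vertex_inord // low_vector_step ?inordK ?(ltnW lt_nt) //.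
rewrite -mulmxA -top_functional_step ?inordK ?(ltnW lt_nt) //.
exact: IH lt_an (ltnW le_nc).
Qed.

Definition interval_retract : homfam X (I a c) := fun i => top_functional i *m const_mx 1.
Definition interval_section : homfam (I a c) X := fun i => const_mx 1 *m low_vector i.

Lemma is_hom_interval_retract : is_hom interval_retract.
Proof.
apply/is_homP => i.
have [lt_it | last_i] := ltnP i.+1 t; last by rewrite !out_map_last -?ltnNge // mul0mx mulmx0.
rewrite out_map_interval // /interval_retract.
case ac_i1: (in_interval a c (next_vertex i)); last by apply: mx_dim0r; rewrite /= ac_i1.
have lt_ic : (i < c)%N by move: ac_i1; rewrite /in_interval next_vertexE // => /andP[].
rewrite mulmxA -top_functional_step // -mulmxA.
case ac_i: (in_interval a c i); first by rewrite const_mx1_mul ?ac_i.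
have lt_ia : (i < a)%N by move: ac_i; rewrite /in_interval (ltnW lt_ic) andbT ltnNge => ->.
by rewrite -(inord_val i) top_functional_below // !mul0mx.
Qed.

Lemma is_hom_interval_section : is_hom interval_section.
Proof.
apply/is_homP => i.
have [lt_it | last_i] := ltnP i.+1 t; last by rewrite !out_map_last -?ltnNge // mul0mx mulmx0.
rewrite out_map_interval // /interval_section.
case ac_i: (in_interval a c i); last by apply: mx_dim0l; rewrite /= ac_i.
have [lt_ic | le_ci] := ltnP i c; last first.
  by apply: mx_dim0r; apply: X_above; rewrite next_vertexE // ltnS.
have ac_i1 : in_interval a c (next_vertex i).
  move: ac_i; rewrite /in_interval next_vertexE // => /andP[le_ai _].
  by rewrite lt_ic (leq_trans le_ai).
rewrite low_vector_step //; last by move: ac_i => /andP[].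
by rewrite !mulmxA mul_const_mx1.
Qed.

Lemma interval_section_retract : heq (hcomp interval_section interval_retract) (hid _).
Proof.
move=> i; rewrite /hcomp /interval_section /interval_retract; apply: const_mx1_conj => ac_i.
by have := low_vector_top_functional ac_i; rewrite inord_val.
Qed.

End IntervalSummand.

Lemma indecomposable_interval (X : rep k t) :
  indecomposable X -> exists a c, (a <= c < t)%N /\ is_iso (I a c) X.
Proof.
move=> X_indec; have X_nz := X_indec.1.
have [i0 X_i0] : exists i : 'I_t, (0 < rdim X i)%N.
  case: (boolP [exists i : 'I_t, 0 < rdim X i]%N) => [/existsP//|/existsPn X0].
  by case: X_nz => i; move: (X0 i); rewrite lt0n negbK => /eqP.
pose nonzero_at n := (n < t)%N && (0 < rdim X (inord n))%N.
have nonzero_ex : exists n, nonzero_at n by exists i0; rewrite /nonzero_at ltn_ord inord_val.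
have nonzero_ub n : nonzero_at n -> (n <= t')%N by case/andP.
case: (ex_maxnP nonzero_ex nonzero_ub) => cn /andP[lt_cn X_cn] c_max.
pose c : 'I_t := inord cn.
have X_above (i : 'I_t) : (c < i)%N -> rdim X i = 0%N.
  move=> lt_ci; apply/eqP; rewrite -leqn0 leqNgt; apply/negP => X_i.
  have := c_max i; rewrite /nonzero_at ltn_ord inord_val X_i => /(_ isT).
  by move: lt_ci; rewrite /c inordK // => /leq_trans h /h; rewrite ltnn.
exists (low_end X_cn), c; split; first by rewrite (low_end_le X_cn) ltn_ord.
apply: summand_indecomposable_iso => //.
  by move/(_ c) => /=; rewrite /in_interval (low_end_le X_cn) leqnn.
exists (interval_section X_cn), (interval_retract X_cn); split.
- exact: is_hom_interval_section.
- exact: is_hom_interval_retract.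
- exact: interval_section_retract.
Qed.

(* The cocycle that is [1] on the arrow into [c] and [0] elsewhere: the
   coefficients of a primitive would have to equal [1] on [c, b] and then
   drop to [0] across the arrow leaving [b]. *)
Lemma continues_not_coboundary a b c d : continues (a, b) (c, d) -> (d < t)%N ->
  ~ (forall D, @coboundary k t (I a b) (I c d) D).
Proof.
rewrite /continues /= => /and3P[lt_ac le_cb le_bd] lt_dt all_cob.
pose D (e : arr t) : 'M[k]_(rdim (I a b) (asrc e), rdim (I c d) (atgt e)) :=
  const_mx (if (asrc e : nat) == c.-1 then 1 else 0).
have [h hD] := all_cob D.
have h_step n : (n.+1 < t)%N ->
  (if in_interval a b n && in_interval c d n.+1 then (if n == c.-1 then 1 else 0) else 0) =
  (if in_interval a b n && in_interval a b n.+1 then hom_coef h n.+1 else 0) -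
  (if in_interval c d n && in_interval c d n.+1 then hom_coef h n else 0).
  move=> lt_nt; pose i : 'I_t := inord n.
  have i_next : (next_vertex i : nat) == i.+1 by rewrite next_vertexE ?inordK // ltnW.
  have := congr1 (@entry_sum _ _ _) (hD (exist _ (i, next_vertex i) i_next)).
  rewrite /D /asrc /atgt /= entry_sumB !entry_sum_mulb !entry_sum_const /i next_vertex_inord //.
  rewrite -/(hom_coef h n) -/(hom_coef h n.+1) /= !inordK ?(ltnW lt_nt) //.
  case: (in_interval a b n); case: (in_interval a b n.+1);
    case: (in_interval c d n); case: (in_interval c d n.+1);
    by rewrite /= ?mul1r ?mulr1 ?mul0r ?mulr0.
have c_gt0 : (0 < c)%N by lia.
have h_c : (if in_interval a b c then hom_coef h c else 0) = 1.
  have := h_step c.-1 ltac:(lia); rewrite prednK // eqxx.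
  have -> : in_interval a b c.-1 by rewrite /in_interval; lia.
  have -> : in_interval c d c by rewrite /in_interval; lia.
  have -> : in_interval c d c.-1 = false by rewrite /in_interval; lia.
  by rewrite subr0.
case ab_c: (in_interval a b c) in h_c; last by move/eqP: h_c; rewrite eq_sym oner_eq0.
move: ab_c; rewrite /in_interval => /andP[_ le_cb'].
have h_const m : (c + m <= b)%N -> hom_coef h (c + m) = 1.
  elim: m => [|m IH] le_mb; first by rewrite addn0.
  have := h_step (c + m) ltac:(lia).
  have -> : (c + m == c.-1) = false by apply/eqP; lia.
  have -> : in_interval a b (c + m) && in_interval a b (c + m).+1 by rewrite /in_interval; lia.
  have -> : in_interval c d (c + m) && in_interval c d (c + m).+1 by rewrite /in_interval; lia.
  rewrite if_same IH; last by lia.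
  by rewrite addnS => /eqP; rewrite eq_sym subr_eq0 => /eqP.
have := h_step b ltac:(lia).
have -> : (b == c.-1) = false by apply/eqP; lia.
have -> : in_interval a b b.+1 = false by rewrite /in_interval; lia.
have -> : in_interval c d b && in_interval c d b.+1 by rewrite /in_interval; lia.
rewrite if_same andbF; have := h_const (b - c)%N ltac:(lia); rewrite subnKC // => ->.
by rewrite sub0r => /eqP; rewrite eq_sym oppr_eq0 oner_eq0.
Qed.

End IntervalReps.

Section ChainThroughProjectiveInjective.
Variables (k : fieldType) (t' s : nat).
Variables (M : nat -> rep k t'.+1) (f : forall j, homfam (M j) (M j.+1)).
Local Notation t := t'.+1.
Local Notation I := (interval_rep k t').
Local Open Scope nat_scope.
Hypothesis s_range : (0 < s < t).
Hypothesis M_indec : forall j, (j <= t) -> indecomposable (M j).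
Hypothesis M_proj : projective_rep (M s).
Hypothesis M_inj : injective_rep (M s).
Hypothesis f_irr : forall j, (j < t) -> irreducible_map (f j).

Lemma projective_injective_interval : is_iso (M s) (I 0 t').
Proof.
have [a [c [ac_range Iac_M]]] := indecomposable_interval (M_indec (ltnW (proj2 (andP s_range)))).
have M_Iac := is_iso_sym Iac_M.
have c_last := projective_interval_final ac_range M_proj M_Iac.
have a_first := injective_interval_initial ac_range M_inj M_Iac.
by subst a c.
Qed.

Lemma chain_before m : (m <= s) -> is_iso (M (s - m)) (I m t').
Proof.
elim: m => [|m IH] le_ms; first by rewrite subn0; apply: projective_injective_interval.
have [x [y [xy_range Ixy_M]]] := indecomposable_interval (M_indec (j := s - m.+1) ltac:(lia)).
have M_next : is_iso (M (s - m.+1).+1) (I m t') by rewrite -subSn // subSS; apply: IH; lia.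
have [g g_irr] := irreducible_map_iso (is_iso_sym Ixy_M) M_next (f_irr (j := s - m.+1) ltac:(lia)).
have [x_m y_last] := irreducible_into_final_interval g_irr xy_range ltac:(lia).
by subst x y; apply: is_iso_sym.
Qed.

Lemma chain_after m : (m <= t - s) -> is_iso (M (s + m)) (I 0 (t' - m)).
Proof.
elim: m => [|m IH] le_m; first by rewrite addn0 subn0; apply: projective_injective_interval.
have [x [y [xy_range Ixy_M]]] := indecomposable_interval (M_indec (j := (s + m).+1) ltac:(lia)).
have [g g_irr] :=
  irreducible_map_iso (IH ltac:(lia)) (is_iso_sym Ixy_M) (f_irr (j := s + m) ltac:(lia)).
have [x_first y_m] := irreducible_from_initial_interval g_irr ltac:(lia) xy_range.
by subst x y; rewrite addnS subnS; apply: is_iso_sym.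
Qed.

Lemma chain_interval_iso j : (j <= t) ->
  is_iso (M j) (I (chain_interval t' s j).1 (chain_interval t' s j).2).
Proof.
rewrite /chain_interval => le_jt; case: ifP => [le_js | /negbT lt_sj] /=.
  by have := chain_before (m := s - j) ltac:(lia); rewrite subKn.
rewrite -ltnNge in lt_sj.
by have := chain_after (m := j - s) ltac:(lia); rewrite subnKC // ltnW.
Qed.

End ChainThroughProjectiveInjective.

Theorem lemma6p3 (k : fieldType) (t s : nat)
  (M : nat -> rep k t) (f : forall j : nat, homfam (M j) (M j.+1)) :
  (0 < s)%N -> (s < t)%N ->
  (forall j, (j <= t)%N -> indecomposable (M j)) ->
  projective_rep (M s) -> injective_rep (M s) ->
  (forall j, (j < t)%N -> irreducible_map (f j)) ->
  forall T : rep k t, tilting T ->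
  exists j, [/\ (j <= t)%N, j != s & is_summand (M j) T].
Proof.
case: t M f => [|t'] // M f s_gt0 lt_st M_indec M_proj M_inj f_irr T.
case=> T_ext [X [sT [rT [[X_indec X_niso X_hom] [sr _ _]]]]].
have X_interval i : exists p : nat * nat,
    (p.1 <= p.2 < t'.+1)%N /\ is_iso (interval_rep k t' p.1 p.2) (X i).
  by have [a [c []]] := indecomposable_interval (X_indec i); exists (a, c).
have [F F_iso] := fin_all_exists X_interval.
have I_summand i : is_summand (interval_rep k t' (F i).1 (F i).2) T.
  by apply: is_summand_iso (F_iso i).2 _; exists (sT i), (rT i); case: (X_hom i).
have F_inj : injective F.
  move=> i j Fij; apply/eqP; apply: contraT => ne_ij; case: (X_niso i j ne_ij).
  by apply: is_iso_trans (is_iso_sym (F_iso i).2) _; rewrite Fij; apply: (F_iso j).2.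
have F_noncont i j : ~~ continues (F i) (F j).
  apply/negP => cont_ij; apply: (@continues_not_coboundary k t' _ _ _ _ cont_ij).
    by case: (F_iso j) => /andP[].
  have [si [ri [hsi _ sri]]] := I_summand i; have [sj [rj [_ hrj srj]]] := I_summand j.
  exact: coboundary_summand hsi sri hrj srj (ext1_vanishes_coboundary T_ext).
have [i [j [le_jt ne_js Fi]]] :=
  noncontinuing_meets_chain (s := s) (F := F) ltac:(lia) (fun i => (F_iso i).1) F_inj F_noncont.
exists j; split=> //; apply: is_summand_iso (I_summand i).
by rewrite Fi; apply: (chain_interval_iso _ M_indec M_proj M_inj f_irr le_jt); apply/andP.
Qed.
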